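(* Let $H$ and $I$ be $r$-element subsets of $[n]$ with $H\le I$. (i) If $P,Q$ are $x$-element subsets of $[r]$ with $P\le Q$, then $H_P\le I_Q$ (as $x$-element subsets of $[n]$). (ii) If $P,Q$ are $y$-element subsets of $[n-r]$ with $P\le Q$, then $H^+_P\le I^+_Q$ (as $(r+y)$-element subsets of $[n]$).
   Context: $[n]=\{1,\dots,n\}$; subsets are written in increasing order. For $k$-element subsets $H=\{h_1<\dots<h_k\}$, $I=\{i_1<\dots<i_k\}$ of $[n]$, $H\le I$ means $h_a\le i_a$ for all $1\le a\le k$. For $I=\{i_1<\dots<i_r\}$ and $P=\{p_1<\dots<p_x\}\subseteq[r]$, $I_P=\{i_{p_1}<\dots<i_{p_x}\}$. For $P\subseteq[n-r]$ of cardinality $y$, $I^+_P=I\cup(I^c)_P$, where $I^c=[n]\setminus I$ written increasingly as $\{i^c_1<\dots<i^c_{n-r}\}$ and $(I^c)_P=\{i^c_{p}:p\in P\}$. *)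

From mathcomp Require Import all_boot all_order.
Set Implicit Arguments. Unset Strict Implicit. Unset Printing Implicit Defensive.

(* Convention: [n] = {1,...,n} is modelled by 'I_n = {0,...,n-1} via the
   order isomorphism k |-> k+1; all notions below are order-theoretic, so
   the shift is harmless. *)

Definition sorted_elts (n : nat) (A : {set 'I_n}) : seq nat :=
  sort leq [seq val i | i in A].

(* the a-th smallest element of A (0-indexed: a = 0 is the minimum) *)
Definition elt (n : nat) (A : {set 'I_n}) (a : nat) : nat :=
  nth 0 (sorted_elts A) a.

Definition gale_le (n : nat) (H I : {set 'I_n}) : Prop :=
  #|H| = #|I| /\ forall a, a < #|H| -> elt H a <= elt I a.

Definition rank_in (n : nat) (A : {set 'I_n}) (x : 'I_n) : nat :=
  index (val x) (sorted_elts A).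

(* I_P = { i_p : p in P }, positions of P (subset of 'I_m, 0-indexed) *)
Definition sub_at (n m : nat) (I : {set 'I_n}) (P : {set 'I_m}) : {set 'I_n} :=
  [set x in I | [exists p in P, rank_in I x == val p]].

Definition plus_at (n m : nat) (I : {set 'I_n}) (P : {set 'I_m}) : {set 'I_n} :=
  I :|: sub_at (~: I) P.

From mathcomp Require Import all_boot all_order zify.
Set Implicit Arguments. Unset Strict Implicit. Unset Printing Implicit Defensive.

(* The Gale order is dual to the order of counting functions: H <= I iff, for
   every threshold t, I has at most as many elements below t as H does.  The
   counting function of H_P is that of P composed with that of H, so (i) is
   monotonicity of counting functions.  For (ii), the counting function of
   H^+_P at t is  c_H(t) + c_P(c_{H^c}(t)).  Passing from H to I lowers c_H(t)
   by some d >= 0 and raises c_{H^c}(t) by the same d, while the counting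
   function of P grows by at most d over an interval of length d. *)

Lemma count_enum_set (T : finType) (A : {set T}) (p : pred T) :
  count p (enum A) = #|[set x in A | p x]|.
Proof.
rewrite -size_filter.
have /card_uniqP <- : uniq (filter p (enum A)) by rewrite filter_uniq ?enum_uniq.
by apply: eq_card => x; rewrite mem_filter mem_enum inE andbC.
Qed.

Lemma count_lt_sorted (s : seq nat) t a : sorted ltn s -> a < size s ->
  (a < count (fun v => v < t) s) = (nth 0 s a < t).
Proof.
elim: s a => [|x s IHs] a //= s_sorted a_lt.
have x_lt_s : all (fun y => x < y) s.
  by apply: order_path_min s_sorted; apply: ltn_trans.
have none_lt : t <= x -> count (fun v => v < t) s = 0.
  move=> le_tx; apply/eqP; rewrite -leqn0 leqNgt -has_count.
  apply/hasP => -[y ys lt_yt].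
  by have := allP x_lt_s y ys => /= x_lt_y; lia.
case: a a_lt => [|a] a_lt /=; case: (ltnP x t) => [lt_xt | le_tx] //=.
- by rewrite none_lt.
- by rewrite -IHs ?(path_sorted s_sorted).
- by rewrite none_lt //; have := allP x_lt_s _ (mem_nth 0 a_lt) => /=; lia.
Qed.

Section SortedElts.

Variable n : nat.
Implicit Type A : {set 'I_n}.

Lemma sorted_elts_ltn A : sorted ltn (sorted_elts A).
Proof.
rewrite ltn_sorted_uniq_leq sort_uniq sort_sorted ?andbT; last exact: leq_total.
by rewrite map_inj_uniq ?enum_uniq //; apply: val_inj.
Qed.

Lemma sorted_elts_uniq A : uniq (sorted_elts A).
Proof. exact: sorted_uniq ltn_trans ltnn _ (sorted_elts_ltn A). Qed.

Lemma size_sorted_elts A : size (sorted_elts A) = #|A|.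
Proof. by rewrite /sorted_elts size_sort size_map cardE. Qed.

Lemma mem_sorted_elts A v :
  (v \in sorted_elts A) = [exists x in A, val x == v].
Proof.
rewrite /sorted_elts mem_sort; apply/mapP/existsP => [[x]|[x /andP[xA /eqP <-]]].
  by rewrite mem_enum => xA ->; exists x; rewrite xA eqxx.
by exists x; rewrite ?mem_enum.
Qed.

Lemma sorted_elts_bound A v : v \in sorted_elts A -> v < n.
Proof. by rewrite mem_sorted_elts => /existsP[x /andP[_ /eqP <-]]; apply: ltn_ord. Qed.

Lemma count_sorted_elts A (p : pred nat) :
  count p (sorted_elts A) = #|[set x in A | p (val x)]|.
Proof.
by rewrite /sorted_elts (permP (permEl (perm_sort _ _))) count_map count_enum_set.
Qed.

End SortedElts.

Definition below (n : nat) (A : {set 'I_n}) (t : nat) : nat :=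
  #|[set x in A | val x < t]|.

Lemma below_countE n (A : {set 'I_n}) t :
  below A t = count (fun v => v < t) (sorted_elts A).
Proof. by rewrite count_sorted_elts. Qed.

Lemma gale_leP n (A B : {set 'I_n}) : #|A| = #|B| ->
  gale_le A B <-> forall t, below B t <= below A t.
Proof.
move=> eq_AB.
have count_lt (C : {set 'I_n}) t a := @count_lt_sorted _ t a (sorted_elts_ltn C).
split=> [[_ le_AB] t | le_below].
  rewrite !below_countE; case def_c: (count _ _) => [|c] //.
  have c_lt : c < #|B| by rewrite -size_sorted_elts -def_c count_size.
  have := count_lt B t c; rewrite size_sorted_elts def_c ltnSn => /(_ c_lt)/esym lt_Bt.
  rewrite count_lt ?size_sorted_elts ?eq_AB //.
  by apply: leq_ltn_trans (le_AB c _) lt_Bt; rewrite eq_AB.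
split=> // a a_lt.
have a_ltB : a < size (sorted_elts B) by rewrite size_sorted_elts -eq_AB.
have := count_lt B (elt B a).+1 a a_ltB; rewrite ltnSn => a_lt_countB.
rewrite -ltnS /elt -count_lt ?size_sorted_elts //.
by rewrite (leq_trans a_lt_countB) // -!below_countE le_below.
Qed.

Lemma leq_below n (A : {set 'I_n}) t t' : t <= t' -> below A t <= below A t'.
Proof.
move=> le_tt'; apply: subset_leq_card; apply/subsetP => x.
by rewrite !inE => /andP[-> /leq_trans ->].
Qed.

Lemma below_addn n (A : {set 'I_n}) t k : below A (t + k) <= below A t + k.
Proof.
elim: k => [|k IHk]; first by rewrite !addn0.
rewrite addnS; apply: leq_trans (_ : below A (t + k) + 1 <= _); last lia.
rewrite !below_countE.
rewrite (eq_count (a2 := predU (fun v => v < t + k) (pred1 (t + k)))); last first.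
  by move=> v /=; rewrite ltnS leq_eqVlt orbC.
have := count_predUI (fun v => v < t + k) (pred1 (t + k)) (sorted_elts A).
have := count_uniq_mem (t + k) (sorted_elts_uniq A).
case: (t + k \in sorted_elts A) => /=; lia.
Qed.

Lemma below_setC n (A : {set 'I_n}) t :
  below A t + below (~: A) t = below [set: 'I_n] t.
Proof.
rewrite /below -(cardsID A [set x in [set: 'I_n] | val x < t]).
by congr (_ + _); apply: eq_card => x; rewrite !inE andbC.
Qed.

Lemma below_setU n (A B : {set 'I_n}) t : A :&: B = set0 ->
  below (A :|: B) t = below A t + below B t.
Proof.
move=> AB0; rewrite /below -cardsUI.
have -> : [set x in A | val x < t] :&: [set x in B | val x < t] = set0.
  by apply/setP => x; rewrite !inE andbACA -in_setI AB0 inE.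
by rewrite cards0 addn0; apply: eq_card => x; rewrite !inE andb_orl.
Qed.

Section SubAt.

Variables (n m : nat) (A : {set 'I_n}) (P : {set 'I_m}).
Hypothesis card_A : #|A| = m.

Lemma sorted_elts_sub_at :
  sorted_elts (sub_at A P) = map (nth 0 (sorted_elts A)) (sorted_elts P).
Proof.
have P_bound j : j \in sorted_elts P -> j < size (sorted_elts A).
  by move/sorted_elts_bound; rewrite size_sorted_elts card_A.
apply: (irr_sorted_eq ltn_trans ltnn (sorted_elts_ltn _)).
  apply: homo_sorted_in (sorted_ltn_nth ltn_trans 0 (sorted_elts_ltn A)) _ (sorted_elts_ltn P).
  by apply/allP => j /P_bound.
move=> v; rewrite mem_sorted_elts; apply/existsP/mapP.
  case=> x /andP[]; rewrite inE => /andP[xA /existsP[p /andP[pP /eqP rank_x]]] /eqP <-.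
  exists (val p); first by rewrite mem_sorted_elts; apply/existsP; exists p; rewrite pP /=.
  by rewrite -rank_x /rank_in nth_index // mem_sorted_elts; apply/existsP; exists x; rewrite xA /=.
case=> j jP ->; have j_lt := P_bound j jP.
have := mem_nth 0 j_lt; rewrite mem_sorted_elts => /existsP[x /andP[xA /eqP def_x]].
exists x; rewrite def_x eqxx andbT inE xA /=.
move: jP; rewrite mem_sorted_elts => /existsP[p /andP[pP /eqP def_j]].
by apply/existsP; exists p; rewrite pP /rank_in def_x index_uniq ?def_j ?eqxx ?sorted_elts_uniq.
Qed.

Lemma card_sub_at : #|sub_at A P| = #|P|.
Proof. by rewrite -size_sorted_elts sorted_elts_sub_at size_map size_sorted_elts. Qed.

Lemma below_sub_at t : below (sub_at A P) t = below P (below A t).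
Proof.
rewrite !below_countE sorted_elts_sub_at count_map; apply: eq_in_count => j jP /=.
by rewrite count_lt_sorted ?sorted_elts_ltn // size_sorted_elts card_A (sorted_elts_bound jP).
Qed.

End SubAt.

Section PlusAt.

Variables (n r : nat) (A : {set 'I_n}) (P : {set 'I_(n - r)}).
Hypothesis card_A : #|A| = r.

Lemma card_setC : #|~: A| = n - r.
Proof. by rewrite cardsCs setCK card_ord card_A. Qed.

Lemma setI_sub_at_setC : A :&: sub_at (~: A) P = set0.
Proof. by apply/setP => x; rewrite !inE; case: (x \in A). Qed.

Lemma card_plus_at : #|plus_at A P| = r + #|P|.
Proof.
by rewrite /plus_at cardsU setI_sub_at_setC cards0 subn0 card_sub_at ?card_A ?card_setC.
Qed.

Lemma below_plus_at t : below (plus_at A P) t = below A t + below P (below (~: A) t).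
Proof. by rewrite below_setU ?setI_sub_at_setC // below_sub_at ?card_setC. Qed.

End PlusAt.

Section GaleMonotone.

Variables (n : nat) (H I : {set 'I_n}).
Hypothesis le_HI : forall t, below I t <= below H t.

Lemma below_sub_at_le m (P Q : {set 'I_m}) t :
  #|H| = m -> #|I| = m -> (forall u, below Q u <= below P u) ->
  below (sub_at I Q) t <= below (sub_at H P) t.
Proof.
move=> card_H card_I le_PQ; rewrite !below_sub_at //.
exact: leq_trans (le_PQ _) (leq_below _ (le_HI t)).
Qed.

Lemma below_plus_at_le r (P Q : {set 'I_(n - r)}) t :
  #|H| = r -> #|I| = r -> (forall u, below Q u <= below P u) ->
  below (plus_at I Q) t <= below (plus_at H P) t.
Proof.
move=> card_H card_I le_PQ; rewrite !below_plus_at //.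
set d := below H t - below I t.
have shift : below (~: I) t = below (~: H) t + d.
  by have := below_setC H t; have := below_setC I t; have := le_HI t; lia.
have := below_addn P (below (~: H) t) d; have := le_PQ (below (~: H) t + d).
rewrite shift; have := le_HI t; lia.
Qed.

End GaleMonotone.

Theorem lemma1 (n r : nat) (H I : {set 'I_n}) :
  #|H| = r -> #|I| = r -> gale_le H I ->
  (forall (x : nat) (P Q : {set 'I_r}),
      #|P| = x -> #|Q| = x -> gale_le P Q ->
      #|sub_at H P| = x /\ #|sub_at I Q| = x /\ gale_le (sub_at H P) (sub_at I Q))
  /\
  (forall (y : nat) (P Q : {set 'I_(n - r)}),
      #|P| = y -> #|Q| = y -> gale_le P Q ->
      #|plus_at H P| = r + y /\ #|plus_at I Q| = r + y /\
      gale_le (plus_at H P) (plus_at I Q)).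
Proof.
move=> card_H card_I /(gale_leP (etrans card_H (esym card_I))) le_HI.
split=> [x | y] P Q card_P card_Q /(gale_leP (etrans card_P (esym card_Q))) le_PQ.
- have card_HP : #|sub_at H P| = x by rewrite card_sub_at.
  have card_IQ : #|sub_at I Q| = x by rewrite card_sub_at.
  do 2!split=> //; apply/gale_leP; first by rewrite card_HP card_IQ.
  by move=> t; apply: below_sub_at_le.
- have card_HP : #|plus_at H P| = r + y by rewrite card_plus_at ?card_P.
  have card_IQ : #|plus_at I Q| = r + y by rewrite card_plus_at ?card_Q.
  do 2!split=> //; apply/gale_leP; first by rewrite card_HP card_IQ.
  by move=> t; apply: below_plus_at_le.
Qed.
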